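(* Let $T=(V,E)$ be a tree with a proper 2-coloring $\chi$, and let $T_\mathcal{B}$, $T_\mathcal{R}$ be its blue and red interior graphs. Then $\mathcal{S}(T)=\mathcal{S}_{even}(T_\mathcal{B})*\mathcal{S}_{even}(T_\mathcal{R})$.
   Context: $N(v)=\{u:uv\in E\}$, $N(D)=\bigcup_{v\in D}N(v)$, $N[U]=N(U)\cup U$. A TD-set of a graph is $D$ with $N(D)=V$, minimal if no proper subset is a TD-set. The stable complex $\mathcal{S}(G)$ is the simplicial complex on $V(G)$ whose facets are $V(G)\setminus D$ for $D$ a minimal TD-set. A leaf is a vertex of degree 1, a support vertex is a vertex adjacent to a leaf; the height of a vertex in a graph is its minimum distance to a leaf of that graph (isolated vertices have height 0); $V_k$ is the set of height-$k$ vertices, $V_{even}$, $V_{odd}$ the sets of vertices of even/odd height. $T_\mathcal{B}$ is the subgraph induced on $V\setminus N[V_1(T)\cap\chi^{-1}(\mathcal{B})]$, $T_\mathcal{R}$ that induced on $V\setminus N[V_1(T)\cap\chi^{-1}(\mathcal{R})]$; their components are balanced trees (no two adjacent vertices of equal height), heights computed in these forests. For such a forest $F$, an odd-TD-set is $D\subseteq V(F)$ with $N_F(D)\supseteq V_{odd}(F)$, minimal if no proper subset is one; the even-stable complex $\mathcal{S}_{even}(F)$ is the simplicial complex on $V_{even}(F)$ whose facets are $V_{even}(F)\setminus D$ for $D$ a minimal odd-TD-set. For complexes $\Delta',\Delta''$ on disjoint vertex sets, the join is $\Delta'*\Delta''=\{F'\cup F'': F'\in\Delta', F''\in\Delta''\}$.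 *)

From mathcomp Require Import all_boot.
Set Implicit Arguments. Unset Strict Implicit. Unset Printing Implicit Defensive.

(* A simple graph on a finite type V is a symmetric irreflexive relation e.
   Induced subgraphs are described by their vertex set S : {set V}. *)
Section Graphs.
Variables (V : finType) (e : rel V).

Definition nbr (S : {set V}) (v : V) : {set V} := [set u in S | e v u].
Definition nbrs (S : {set V}) (D : {set V}) : {set V} :=
  \bigcup_(v in D) nbr S v.
Definition cnbrs (S : {set V}) (U : {set V}) : {set V} := nbrs S U :|: U.

Definition leafb (S : {set V}) (v : V) : bool := (v \in S) && (#|nbr S v| == 1).
Definition isolatedb (S : {set V}) (v : V) : bool := (v \in S) && (nbr S v == set0).

Fixpoint ball (S : {set V}) (v : V) (k : nat) : {set V} :=
  match k with
  | 0 => [set v]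
  | k'.+1 => cnbrs S (ball S v k')
  end.

(* v has height k in the induced subgraph on S: minimum distance to a leaf
   is k, or v is isolated and k = 0 *)
Definition has_height (S : {set V}) (v : V) (k : nat) : bool :=
  (v \in S) &&
  ((isolatedb S v && (k == 0)) ||
   ([exists u in ball S v k, leafb S u] &&
    ((k == 0) || ~~ [exists u in ball S v k.-1, leafb S u]))).

(* heights never exceed #|V| - 1, so quantifying over 'I_#|V|.+1 is exhaustive *)
Definition Vk (S : {set V}) (k : nat) : {set V} := [set v in S | has_height S v k].
Definition Veven (S : {set V}) : {set V} :=
  [set v in S | [exists k : 'I_#|V|.+1, ~~ odd k && has_height S v k]].
Definition Vodd (S : {set V}) : {set V} :=
  [set v in S | [exists k : 'I_#|V|.+1, odd k && has_height S v k]].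

Definition TDset (D : {set V}) : bool := nbrs setT D == setT.

Definition oddTDset (S : {set V}) (D : {set V}) : bool :=
  (D \subset S) && (Vodd S \subset nbrs S D).

(* simplicial complexes represented by their set of faces *)
Definition stable_complex : {set {set V}} :=
  [set F : {set V} | [exists D : {set V}, minset TDset D && (F \subset ~: D)]].

Definition even_stable_complex (S : {set V}) : {set {set V}} :=
  [set F : {set V} | [exists D : {set V}, minset (oddTDset S) D && (F \subset Veven S :\: D)]].

Definition join (A B : {set {set V}}) : {set {set V}} :=
  [set F :|: G | F in A, G in B].

(* blue = true, red = false *)
Definition interior (chi : V -> bool) (c : bool) : {set V} :=
  ~: cnbrs setT (Vk setT 1 :&: [set v | chi v == c]).

Definition is_tree : Prop :=
  (forall x y, connect e x y) /\
  ~ (exists s : seq V, [/\ uniq s, 3 <= size s & cycle e s]).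

Definition proper2coloring (chi : V -> bool) : Prop :=
  forall u v, e u v -> chi u != chi v.

End Graphs.

From mathcomp Require Import all_boot zify.
Set Implicit Arguments. Unset Strict Implicit. Unset Printing Implicit Defensive.

(* In a properly 2-coloured graph, D is a total dominating set iff for each
   colour c its colour-c part dominates every vertex of the other colour, so a
   minimal TD-set is the union of two independent minimal "halves", one per
   colour.  The half of colour c contains every colour-c support vertex (the
   only neighbour of its leaf) and otherwise lies in the interior T_c.  There
   all leaves have colour c, so heights in T_c are even exactly on colour c;
   dropping the forced support vertices then turns minimal halves of colour c
   into minimal odd-TD-sets of T_c and back.  Complements of minimal TD-sets
   thus split by colour into faces of the two even-stable complexes. *)

Section MinimalSets.
Variable T : finType.
Implicit Types (A S I B D X Y : {set T}) (P Q R : pred {set T}).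

Lemma minset_split A P Q R D :
  (forall D, P D = Q (D :&: A) && R (D :&: ~: A)) ->
  (forall X, Q X -> X \subset A) -> (forall X, R X -> X \subset ~: A) ->
  minset P D <-> minset Q (D :&: A) /\ minset R (D :&: ~: A).
Proof.
move=> PE QA RA; have DE := setID D A; rewrite setDE in DE.
have glueA X Y : X \subset A -> Y \subset ~: A -> (X :|: Y) :&: A = X.
  move=> sXA sYA; rewrite setIUl (setIidPl sXA) (_ : Y :&: A = set0) ?setU0 //.
  by apply/disjoint_setI0; rewrite disjoints_subset.
have glueCA X Y : X \subset A -> Y \subset ~: A -> (X :|: Y) :&: ~: A = Y.
  move=> sXA sYA; rewrite setIUl (setIidPl sYA) (_ : X :&: ~: A = set0) ?set0U //.
  by apply/disjoint_setI0; rewrite disjoints_subset setCK.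
split=> [/minsetP[PD minD] | [/minsetP[QD minQ] /minsetP[RD minR]]].
  move: (PD); rewrite PE => /andP[QD RD].
  split; apply/minsetP; split=> // B PB sBD.
    have [sBA sDCA] := (QA _ PB, subsetIr D (~: A)).
    have sED : B :|: D :&: ~: A \subset D by rewrite subUset (subset_trans sBD) ?subsetIl.
    have PE' : P (B :|: D :&: ~: A) by rewrite PE glueA // glueCA // PB RD.
    by rewrite -(minD _ PE' sED) glueA.
  have [sDA sBCA] := (subsetIr D A, RA _ PB).
  have sED : D :&: A :|: B \subset D.
    by rewrite subUset subsetIl (subset_trans sBD) ?subsetIl.
  have PE' : P (D :&: A :|: B) by rewrite PE glueA // glueCA // PB QD.
  by rewrite -(minD _ PE' sED) glueCA.
apply/minsetP; rewrite PE QD RD; split=> // B; rewrite PE => /andP[QB RB] sBD.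
rewrite -(setID B A) setDE -DE.
by rewrite (minQ _ QB (setSI _ sBD)) (minR _ RB (setSI _ sBD)).
Qed.

Lemma minset_subset I Q X :
  (forall X, Q X -> Q (X :&: I)) -> minset Q X -> X \subset I.
Proof.
by move=> QI /minsetP[QX minX]; rewrite -(minX _ (QI _ QX)) ?subsetIr ?subsetIl.
Qed.

Lemma minset_shift S I P Q X :
  [disjoint S & I] ->
  (forall D, P D -> D = S :|: (D :&: I)) ->
  (forall X, X \subset I -> P (S :|: X) = Q X) ->
  X \subset I -> minset P (S :|: X) <-> minset Q X.
Proof.
move=> dSI PE PQ sXI.
have shiftK Y : Y \subset I -> (S :|: Y) :&: I = Y.
  by move=> sYI; rewrite setIUl (disjoint_setI0 dSI) set0U (setIidPl sYI).
split=> /minsetP[PX minX]; apply/minsetP.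
  rewrite -PQ //; split=> // B QB sBX.
  have sBI := subset_trans sBX sXI.
  have := minX (S :|: B); rewrite PQ // => /(_ QB (setUS _ sBX)) eSB.
  by rewrite -(shiftK _ sBI) eSB shiftK.
rewrite PQ //; split=> // B PB sBSX.
have sBI : B :&: I \subset X by rewrite -(shiftK _ sXI) setSI.
by rewrite (PE _ PB) (minX _ _ sBI) // -PQ ?subsetIr // -PE.
Qed.
End MinimalSets.

Section Graphs.
Variables (V : finType) (e : rel V).
Hypothesis e_sym : symmetric e.
Implicit Types (S A B D F X : {set V}) (u v w : V) (c : bool).

Lemma in_nbr S v u : (u \in nbr e S v) = (u \in S) && e v u.
Proof. by rewrite inE. Qed.

Lemma in_nbrsP S D u :
  reflect (exists2 v, v \in D & (u \in S) && e v u) (u \in nbrs e S D).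
Proof.
by apply: (iffP bigcupP) => -[v vD]; rewrite ?in_nbr => uv; exists v; rewrite ?in_nbr.
Qed.

Lemma nbrsS S D D' : D \subset D' -> nbrs e S D \subset nbrs e S D'.
Proof.
move=> sDD'; apply/subsetP => u /in_nbrsP[v vD uv].
by apply/in_nbrsP; exists v; rewrite ?(subsetP sDD').
Qed.

Lemma nbrs_set1 S v : nbrs e S [set v] = nbr e S v.
Proof. exact: big_set1. Qed.

Lemma nbrsU S A B : nbrs e S (A :|: B) = nbrs e S A :|: nbrs e S B.
Proof. exact: bigcup_setU. Qed.

Lemma ballS S v k u :
  (u \in ball e S v k.+1) = (u \in nbrs e S (ball e S v k)) || (u \in ball e S v k).
Proof. by rewrite /= /cnbrs in_setU. Qed.

Lemma leaf_nbrE u w : leafb e setT u -> e u w -> nbr e setT u = [set w].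
Proof.
case/andP=> _ /cards1P[x nbr_u] euw.
have : w \in nbr e setT u by rewrite in_nbr in_setT.
by rewrite nbr_u => /set1P ->.
Qed.

Lemma height1E w :
  has_height e setT w 1 = ~~ leafb e setT w && [exists u, e w u && leafb e setT u].
Proof.
have ball1 u : (u \in ball e setT w 1) = e w u || (u == w).
  by rewrite ballS nbrs_set1 in_nbr in_setT inE.
rewrite /has_height in_setT andbF /= -[cnbrs _ _ _]/(ball e setT w 1) andbC.
have -> : [exists u in [set w], leafb e setT u] = leafb e setT w.
  by apply/existsP/idP => [[u /andP[/set1P -> //]]|lw]; exists w; rewrite set11.
case lw: (leafb e setT w) => //=; apply/existsP/existsP => -[u].
  rewrite ball1 => /andP[/orP[wu|/eqP uw] lu]; first by exists u; rewrite wu.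
  by rewrite uw lw in lu.
by case/andP=> wu lu; exists u; rewrite ball1 wu.
Qed.

Section Forests.
Hypothesis e_irr : irreflexive e.
Hypothesis e_acyclic : ~ (exists s : seq V, [/\ uniq s, 3 <= size s & cycle e s]).

Definition edge_into S : rel V := [rel a b | e a b && (b \in S)].

Lemma walk_last_in S v p : v \in S -> path (edge_into S) v p -> last v p \in S.
Proof. by elim: p v => //= y p IHp v _ /andP[/andP[_ yS]]; apply: IHp. Qed.

Lemma walk_ball S v p : path (edge_into S) v p -> last v p \in ball e S v (size p).
Proof.
elim/last_ind: p => [|p y IHp]; first by rewrite inE.
rewrite rcons_path last_rcons size_rcons ballS => /andP[/IHp pv /andP[ey yS]].
by apply/orP; left; apply/in_nbrsP; exists (last v p); rewrite ?yS.
Qed.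

(* A non-leaf end of a nontrivial simple walk has a second neighbour, and it
   cannot lie on the walk without closing a cycle. *)
Lemma simple_walk_extend S v p :
  v \in S -> path (edge_into S) v p -> uniq (v :: p) -> p != [::] ->
  ~~ leafb e S (last v p) -> exists2 z, z \notin v :: p & (z \in S) && e (last v p) z.
Proof.
case/lastP: p => // p y vS; rewrite rcons_path last_rcons => /andP[pv /andP[exy yS]].
move=> uvy _ nly; have xy : last v p \in nbr e S y by rewrite in_nbr walk_last_in // e_sym.
have : 0 < #|nbr e S y :\ last v p|.
  by move: nly; rewrite /leafb yS (cardsD1 (last v p)) xy add1n eqSS lt0n.
case/card_gt0P => z; rewrite !inE => /and3P[zx zS yz].
exists z; rewrite ?zS ?yz //; apply: contraT; rewrite negbK => zvy.
have zy : z != y by apply: contraTneq yz => ->; rewrite e_irr.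
have zvp : z \in v :: p by move: zvy; rewrite -rcons_cons mem_rcons inE (negbTE zy).
have [q1 [q2 vpE]] : exists q1 q2, v :: p = q1 ++ z :: q2.
  by case/splitPr: zvp => q1 q2; exists q1, q2.
case: e_acyclic; exists (z :: rcons q2 y).
have vpyE : v :: rcons p y = q1 ++ z :: rcons q2 y by rewrite -rcons_cons vpE rcons_cat.
split.
- by move: uvy; rewrite vpyE cat_uniq => /and3P[].
- case: q2 vpE {vpyE} => [|a q2] vpE; last by rewrite /= size_rcons.
  by move: zx; rewrite -[last v p]/(last v (v :: p)) vpE cats1 last_rcons eqxx.
- rewrite /cycle rcons_path last_rcons yz andbT.
  have pvy : path (edge_into S) v (rcons p y) by rewrite rcons_path pv /edge_into /= exy.
  have : sorted e (v :: rcons p y) by apply: sub_path pvy => a b /andP[].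
  by rewrite vpyE sorted_cat_cons => /andP[].
Qed.

Lemma simple_walk_size v p : uniq (v :: p) -> size p < #|V|.
Proof. by move/card_uniqP => /= <-; apply: max_card. Qed.

Lemma simple_walk_to_leaf S v p :
  v \in S -> path (edge_into S) v p -> uniq (v :: p) -> p != [::] ->
  exists2 q, path (edge_into S) v q & uniq (v :: q) && leafb e S (last v q).
Proof.
move=> vS; have [n] := ubnP (#|V| - size p); elim: n p => // n IHn p lt_n pv uvp p0.
have [lf|nlf] := boolP (leafb e S (last v p)); first by exists p; rewrite ?uvp.
have [z zvp /andP[zS ez]] := simple_walk_extend vS pv uvp p0 nlf.
have szp := simple_walk_size uvp.
apply: (IHn (rcons p z)).
- by rewrite size_rcons; lia.
- by rewrite rcons_path pv /edge_into /= ez zS.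
- by rewrite -rcons_cons rcons_uniq zvp uvp.
- by rewrite -size_eq0 size_rcons.
Qed.

Lemma height_exists S v : v \in S -> exists2 k, k < #|V|.+1 & has_height e S v k.
Proof.
move=> vS; have [iso|niso] := boolP (isolatedb e S v).
  by exists 0 => //; rewrite /has_height vS iso.
have [w] : exists w, w \in nbr e S v by apply/set0Pn; move: niso; rewrite /isolatedb vS.
rewrite in_nbr => /andP[wS vw].
have [||//|q pq /andP[uq lq]] := @simple_walk_to_leaf S v [:: w] vS.
- by rewrite /= /edge_into /= vw wS.
- by rewrite /= inE andbT; apply: contraTneq vw => ->; rewrite e_irr.
pose P k := [exists u in ball e S v k, leafb e S u].
have Pq : P (size q) by apply/existsP; exists (last v q); rewrite walk_ball.
have [k Pk mink] := ex_minnP (ex_intro P _ Pq).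
exists k; first by have := mink _ Pq; have := simple_walk_size uq; lia.
rewrite /has_height vS (negbTE niso) /=; apply/andP; split=> //.
by case: k Pk mink => //= k _ mink; apply/negP => /mink; rewrite ltnn.
Qed.

End Forests.

Section Colourings.
Variable chi : V -> bool.
Hypothesis chi_proper : proper2coloring e chi.

Definition colour c : {set V} := [set v | chi v == c].

Lemma colourN c : colour (~~ c) = ~: colour c.
Proof. by apply/setP => v; rewrite !inE; case: (chi v); case: c. Qed.

Lemma colourTF : colour true :|: colour false = setT.
Proof. by apply/setP => v; rewrite !inE; case: (chi v). Qed.

Lemma colour_adj u v : e u v -> chi v = ~~ chi u.
Proof. by move/chi_proper; case: (chi u); case: (chi v). Qed.

Lemma ball_parity S v k u :
  u \in ball e S v k -> (k == 0) || (u \notin ball e S v k.-1) -> chi u = odd k (+) chi v.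
Proof.
elim: k u => [|k IHk] u; first by rewrite inE => /eqP ->.
rewrite ballS /= => /orP[/in_nbrsP[w wk /andP[uS wu]] uk|->]; last by [].
rewrite (colour_adj wu); case: k IHk wk uk => [_|k IHk] wk uk.
  by move: wk; rewrite inE => /eqP ->; case: (chi v).
rewrite (IHk w wk) /=; first by case: (odd k); case: (chi v).
apply: contra uk => wk'; rewrite ballS; apply/orP; left.
by apply/in_nbrsP; exists w; rewrite ?uS.
Qed.

Lemma nbrs_colour c D u :
  chi u = ~~ c -> (u \in nbrs e setT D) = (u \in nbrs e setT (D :&: colour c)).
Proof.
move=> cu; apply/idP/idP; last exact/subsetP/nbrsS/subsetIl.
case/in_nbrsP => v vD /andP[_ vu]; apply/in_nbrsP; exists v; rewrite ?in_setT ?vu //.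
by move: cu; rewrite !inE vD (colour_adj vu); case: (chi v); case: c.
Qed.

Definition colour_TDset c D :=
  (D \subset colour c) && (colour (~~ c) \subset nbrs e setT D).

Lemma TDset_colour D :
  TDset e D = colour_TDset true (D :&: colour true) &&
              colour_TDset false (D :&: ~: colour true).
Proof.
have domE c : (colour (~~ c) \subset nbrs e setT (D :&: colour c)) =
              (colour (~~ c) \subset nbrs e setT D).
  apply/subsetP/subsetP => dom u uc; move/dom: (uc); rewrite inE in uc;
    by rewrite (nbrs_colour (c := c) D) ?(eqP uc).
rewrite /TDset /colour_TDset -(colourN true) /= !subsetIr (domE true) (domE false) /=.
by rewrite -subUset setUC colourTF subTset.
Qed.

Lemma minset_TDset D :
  minset (TDset e) D <-> forall c, minset (colour_TDset c) (D :&: colour c).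
Proof.
have colour_true X : colour_TDset true X -> X \subset colour true by case/andP.
have colour_false X : colour_TDset false X -> X \subset ~: colour true.
  by rewrite -(colourN true) => /andP[].
apply: (iff_trans (minset_split D TDset_colour colour_true colour_false)).
by rewrite -(colourN true); split=> [[? ?] []|min] //; split; apply: min.
Qed.

Definition supports c : {set V} := Vk e setT 1 :&: colour c.

Lemma in_supports c s : (s \in supports c) =
  [&& chi s == c, ~~ leafb e setT s & [exists u, e s u && leafb e setT u]].
Proof. by rewrite in_setI in_set in_setT /= height1E inE andbC. Qed.

Lemma in_interior c v : (v \in interior e chi c) =
  (v \notin supports c) && (v \notin nbrs e setT (supports c)).
Proof. by rewrite in_setC in_setU negb_or andbC. Qed.

Lemma supports_interior c : [disjoint supports c & interior e chi c].
Proof. by apply/pred0P => v /=; rewrite in_interior; case: (v \in supports c). Qed.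

Lemma colour_TDset_supports c D : colour_TDset c D -> supports c \subset D.
Proof.
case/andP=> _ dom; apply/subsetP => s.
rewrite in_supports => /and3P[/eqP cs _ /existsP[l /andP[sl ll]]].
have : l \in nbrs e setT D by apply: (subsetP dom); rewrite inE (colour_adj sl) cs.
case/in_nbrsP => v vD /andP[_ vl].
have : v \in nbr e setT l by rewrite in_nbr in_setT e_sym.
by rewrite (leaf_nbrE ll (_ : e l s)) => [/set1P <-|]; rewrite // e_sym.
Qed.

Lemma notin_interior_colour c v :
  chi v = c -> v \notin interior e chi c -> v \in supports c.
Proof.
move=> cv; rewrite in_interior negb_and !negbK => /orP[//|/in_nbrsP[s sS /andP[_ sv]]].
by move: sS cv; rewrite in_supports (colour_adj sv) => /andP[/eqP -> _]; case: c.
Qed.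

Lemma interior_nbr c u w :
  chi u = ~~ c -> u \in interior e chi c -> e u w -> w \in interior e chi c.
Proof.
move=> cu; rewrite !in_interior => /andP[_ uN] uw; apply/andP; split.
  by apply: contra uN => wS; apply/in_nbrsP; exists w; rewrite // in_setT e_sym.
apply/negP => /in_nbrsP[s sS /andP[_ sw]].
move: sS; rewrite in_supports => /andP[/eqP cs _].
by move: (colour_adj sw) (colour_adj uw); rewrite cs cu; case: (c); case: (chi w).
Qed.

Section Trees.
Hypothesis e_irr : irreflexive e.
Hypothesis e_tree : is_tree e.
Hypothesis V_big : 3 <= #|V|.

Lemma connected_closed_card A x : x \in A -> nbrs e setT A \subset A -> #|V| <= #|A|.
Proof.
move=> xA closedA; rewrite -cardsT subset_leq_card //; apply/subsetP => y _.
have clA : closed e A.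
  apply: (intro_closed (sym_connect_sym e_sym)) => a b ab aA.
  by apply: (subsetP closedA); apply/in_nbrsP; exists a; rewrite ?in_setT.
by rewrite -(closed_connect clA (e_tree.1 x y)).
Qed.

(* A vertex of the other colour keeps all its tree neighbours in T_c; with a
   single neighbour w, either w is a leaf too (then #|V| = 2) or w is a
   support vertex of colour c, contradicting u \in T_c. *)
Lemma interior_leaf_colour c u :
  u \in interior e chi c -> #|nbr e (interior e chi c) u| <= 1 -> chi u = c.
Proof.
move=> uI; have [//|/negPf cu'] := eqVneq (chi u) c.
have cu : chi u = ~~ c by move: cu'; case: (chi u); case: (c).
have -> : nbr e (interior e chi c) u = nbr e setT u.
  apply/setP => w; rewrite !in_nbr in_setT.
  by case uw: (e u w); rewrite ?andbF ?andbT ?(interior_nbr cu uI uw).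
rewrite leq_eqVlt ltnS leqn0 => /orP[/cards1P[w nbr_u]|/eqP/cards0_eq nbr_u]; last first.
  have := @connected_closed_card [set u] u (set11 u).
  by rewrite nbrs_set1 nbr_u sub0set cards1 => /(_ isT)/(leq_trans V_big).
have uw : e u w by have := set11 w; rewrite -nbr_u in_nbr => /andP[].
have wu : e w u by rewrite e_sym.
have cw : chi w = c by rewrite (colour_adj uw) cu negbK.
have [lw|nlw] := boolP (leafb e setT w).
  have := @connected_closed_card [set u; w] u (setU11 u _).
  rewrite nbrsU !nbrs_set1 nbr_u (leaf_nbrE lw wu) setUC subxx.
  by move=> /(_ isT)/(leq_trans V_big); rewrite cards2; case: (u != w).
have : u \in nbrs e setT (supports c).
  have lu : leafb e setT u by rewrite /leafb in_setT nbr_u cards1.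
  apply/in_nbrsP; exists w; rewrite ?in_setT ?wu //.
  by rewrite in_supports cw eqxx nlw; apply/existsP; exists u; rewrite wu lu.
by move: uI; rewrite in_interior => /andP[_ /negP].
Qed.

Lemma interior_height_parity c v k :
  has_height e (interior e chi c) v k -> chi v = odd k (+) c.
Proof.
case/andP=> vI /orP[/andP[/andP[_ /eqP nbr0] /eqP->]|].
  by rewrite (interior_leaf_colour vI) ?nbr0 ?cards0.
case/andP=> /existsP[u /andP[uk lu]] hk; have /andP[uI /eqP deg1] := lu.
have uk' : (k == 0) || (u \notin ball e (interior e chi c) v k.-1).
  case/orP: hk => [->//|nk]; apply/orP; right.
  by apply: contra nk => uk'; apply/existsP; exists u; rewrite uk'.
have := ball_parity uk uk'; rewrite (interior_leaf_colour uI) ?deg1 // => ->.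
by rewrite addbA addbb.
Qed.

Lemma interior_parity c v b : v \in interior e chi c ->
  [exists k : 'I_#|V|.+1, (odd k == b) && has_height e (interior e chi c) v k] =
  (chi v == b (+) c).
Proof.
move=> vI; apply/existsP/eqP => [[k /andP[/eqP <- /interior_height_parity //]]|cv].
have [k lt_k hk] := height_exists e_irr e_tree.2 vI.
exists (Ordinal lt_k); rewrite /= hk andbT.
by move: cv; rewrite (interior_height_parity hk); case: (odd k); case: b; case: (c).
Qed.

Lemma Veven_interior c : Veven e (interior e chi c) = interior e chi c :&: colour c.
Proof.
apply/setP => v; rewrite in_setI [v \in Veven _ _]in_set [v \in colour _]in_set.
case vI: (v \in interior e chi c) => //=.
rewrite -[c in RHS]/(false (+) c) -(interior_parity _ vI).
by apply: eq_existsb => k; case: (odd k).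
Qed.

Lemma Vodd_interior c : Vodd e (interior e chi c) = interior e chi c :&: colour (~~ c).
Proof.
apply/setP => v; rewrite in_setI [v \in Vodd _ _]in_set [v \in colour _]in_set.
case vI: (v \in interior e chi c) => //=.
rewrite -[~~ c]/(true (+) c) -(interior_parity _ vI).
by apply: eq_existsb => k; case: (odd k).
Qed.

Lemma supports_Veven_disjoint c :
  [disjoint supports c & Veven e (interior e chi c)].
Proof.
by rewrite Veven_interior; apply: disjointWr (subsetIl _ _) (supports_interior c).
Qed.

Lemma colour_TDset_decomp c D :
  colour_TDset c D -> D = supports c :|: (D :&: Veven e (interior e chi c)).
Proof.
move=> TD; apply/eqP; rewrite eqEsubset subUset subsetIl (colour_TDset_supports TD) !andbT.
apply/subsetP => v vD; have /eqP cv : chi v == c.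
  by case/andP: TD => /subsetP/(_ v vD); rewrite inE.
apply/setUP; have [vI|vI] := boolP (v \in interior e chi c).
  right; rewrite Veven_interior; apply/setIP; split=> //.
  by apply/setIP; split; rewrite // inE cv.
by left; apply: notin_interior_colour.
Qed.

Lemma colour_TDset_shift c X : X \subset Veven e (interior e chi c) ->
  colour_TDset c (supports c :|: X) = oddTDset e (interior e chi c) X.
Proof.
rewrite Veven_interior subsetI => /andP[XI Xc].
rewrite /colour_TDset /oddTDset subUset subsetIr Xc XI /= Vodd_interior.
apply/subsetP/subsetP => dom u.
  rewrite in_setI => /andP[uI /dom]; rewrite nbrsU in_setU => /orP[uS|].
    by move: uI; rewrite in_interior uS andbF.
  by case/in_nbrsP => v vX /andP[_ vu]; apply/in_nbrsP; exists v; rewrite ?uI.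
move=> uc; rewrite nbrsU in_setU; have [uI|uI] := boolP (u \in interior e chi c).
  have /dom/in_nbrsP[v vX /andP[_ vu]] : u \in interior e chi c :&: colour (~~ c).
    by apply/setIP.
  by apply/orP; right; apply/in_nbrsP; exists v; rewrite ?in_setT.
move: uI; rewrite in_interior negb_and !negbK => /orP[uS|->//].
by move: uc uS; rewrite in_supports inE => /eqP ->; case: (c).
Qed.

Lemma oddTDset_Veven c X :
  oddTDset e (interior e chi c) X ->
  oddTDset e (interior e chi c) (X :&: Veven e (interior e chi c)).
Proof.
case/andP=> XI dom; rewrite /oddTDset subIset ?XI //=.
apply/subsetP => u uo; have /in_nbrsP[v vX /andP[uI vu]] := subsetP dom u uo.
move: uo; rewrite Vodd_interior => /setIP[_]; rewrite inE => /eqP uc.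
apply/in_nbrsP; exists v; rewrite ?uI ?vu // Veven_interior !in_setI vX (subsetP XI) //=.
by rewrite inE -(negbK (chi v)) -(colour_adj vu) uc negbK.
Qed.

Lemma minset_colour_TDset c X : X \subset Veven e (interior e chi c) ->
  minset (colour_TDset c) (supports c :|: X) <->
  minset (oddTDset e (interior e chi c)) X.
Proof.
exact: minset_shift (supports_Veven_disjoint c) (@colour_TDset_decomp c)
                    (@colour_TDset_shift c).
Qed.

Lemma stable_face_colour c D F : minset (TDset e) D -> F \subset ~: D ->
  F :&: colour c \in even_stable_complex e (interior e chi c).
Proof.
move=> /minset_TDset/(_ c) minDc sFD; have TDc := minsetp minDc.
rewrite inE; apply/existsP; exists (D :&: colour c :&: Veven e (interior e chi c)).
apply/andP; split.
  by apply/(minset_colour_TDset (subsetIr _ _)); rewrite -(colour_TDset_decomp TDc).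
apply/subsetP => v /setIP[vF vc]; have cv : chi v = c by move: vc; rewrite inE => /eqP.
have vD : v \notin D by have := subsetP sFD v vF; rewrite inE.
rewrite in_setD !in_setI (negbTE vD) /= Veven_interior; apply/setIP; split=> //.
apply: contraT => /(notin_interior_colour cv)/(subsetP (colour_TDset_supports TDc)).
by rewrite in_setI (negbTE vD).
Qed.

Lemma even_stable_faces_join F1 F2 :
  F1 \in even_stable_complex e (interior e chi true) ->
  F2 \in even_stable_complex e (interior e chi false) ->
  F1 :|: F2 \in stable_complex e.
Proof.
rewrite !inE => /existsP[D1 /andP[minD1 sF1]] /existsP[D2 /andP[minD2 sF2]].
pose F' c := if c then F1 else F2; pose D' c := if c then D1 else D2.
have minD' c : minset (oddTDset e (interior e chi c)) (D' c) by case: c.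
have sD' c : D' c \subset Veven e (interior e chi c).
  exact: minset_subset (@oddTDset_Veven c) (minD' c).
pose Dc c := supports c :|: D' c.
have minDc c : minset (colour_TDset c) (Dc c) by apply/(minset_colour_TDset (sD' c)).
have Dc_colour c : Dc c \subset colour c by case/andP: (minsetp (minDc c)).
have DE c : (Dc true :|: Dc false) :&: colour c = Dc c.
  have disj c' : Dc c' :&: colour (~~ c') = set0.
    by apply/disjoint_setI0; rewrite disjoints_subset colourN setCK Dc_colour.
  case: c; rewrite setIUl (setIidPl (Dc_colour _)).
    by rewrite (disj false) setU0.
  by rewrite (disj true) set0U.
have sF' c : F' c \subset Veven e (interior e chi c) :\: D' c by case: c; rewrite /F' /D'.
have sFD c : F' c \subset ~: (Dc true :|: Dc false).
  apply/subsetP => v /(subsetP (sF' c)).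
  rewrite Veven_interior => /setDP[/setIP[vI vc] vD'].
  rewrite in_setC; apply: contra vD' => vD.
  have : v \in Dc c by rewrite -(DE c); apply/setIP.
  by rewrite in_setU => /orP[vS|//]; move: vI; rewrite in_interior vS.
apply/existsP; exists (Dc true :|: Dc false).
rewrite subUset (sFD true) (sFD false) !andbT.
by apply/minset_TDset => c; rewrite DE.
Qed.

End Trees.

End Colourings.

End Graphs.

Theorem theorem4p9 (V : finType) (e : rel V) (chi : V -> bool) :
  symmetric e -> irreflexive e -> is_tree e -> 3 <= #|V| ->
  proper2coloring e chi ->
  stable_complex e =
  join (even_stable_complex e (interior e chi true))
       (even_stable_complex e (interior e chi false)).
Proof.
move=> e_sym e_irr e_tree V_big chi_proper.
apply/setP => F; apply/idP/imset2P => [|[F1 F2 F1face F2face ->]]; last first.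
  exact: (even_stable_faces_join e_sym chi_proper e_irr e_tree V_big F1face F2face).
rewrite inE => /existsP[D /andP[minD sFD]].
have face c := stable_face_colour e_sym chi_proper e_irr e_tree V_big c minD sFD.
apply: (Imset2spec (face true) (face false)).
by rewrite -setIUr colourTF setIT.
Qed.
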